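(* Let $T$ be a positive integer and $\epsilon = T^{-1/3}$. Consider the forecaster that sets $S_0 = 0$ and, for $t = 1,\ldots,T$, predicts $p_t = 1/2 + \epsilon\cdot\mathrm{sgn}(S_{t-1})$, observes $x_t$, and sets $S_t = S_{t-1} + (x_t - p_t)$. If $x_1,\ldots,x_T$ are independent $\mathrm{Bernoulli}(1/2)$ bits, then $\mathbb{E}[\mathsf{CalDist}(x,p)] \le C\,T^{1/3}$ for a universal constant $C$.
   Context: $\mathrm{sgn}(0) = 0$, $\mathrm{sgn}(y)=1$ for $y>0$, $\mathrm{sgn}(y)=-1$ for $y<0$. For $x \in \{0,1\}^T$, let $\mathcal{C}(x) = \{q \in [0,1]^T : \sum_{t=1}^T (x_t - q_t)\mathbf{1}[q_t = \alpha] = 0 \text{ for all } \alpha \in [0,1]\}$ and $\mathsf{CalDist}(x,p) = \min_{q \in \mathcal{C}(x)} \|p-q\|_1$. *)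

From mathcomp Require Import all_boot all_order all_algebra.
From mathcomp Require Import all_classical all_reals all_analysis.
Set Implicit Arguments. Unset Strict Implicit. Unset Printing Implicit Defensive.
Import Order.TTheory GRing.Theory Num.Theory.
Local Open Scope classical_set_scope.
Local Open Scope ring_scope.

Section Defs.
Variable R : realType.

(* Bits as reals, 0-based time index: xr x t = x_{t+1} (0 outside range). *)
Definition bitval (T : nat) (x : {ffun 'I_T -> bool}) (t : nat) : R :=
  oapp (fun i : 'I_T => (x i)%:R) 0 (insub t).

Fixpoint Sstate (eps : R) (x : nat -> R) (t : nat) : R :=
  match t with
  | 0 => 0
  | t'.+1 => Sstate eps x t' + (x t' - (2^-1 + eps * Num.sg (Sstate eps x t')))
  end.

(* prediction at (0-based) time t, i.e. p_{t+1} = 1/2 + eps * sgn(S_t) *)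
Definition forecast (eps : R) (x : nat -> R) (t : nat) : R :=
  2^-1 + eps * Num.sg (Sstate eps x t).

Definition preds (T : nat) (x : {ffun 'I_T -> bool}) : 'I_T -> R :=
  fun i => forecast (powR (T%:R) (- 3^-1)) (bitval x) i.

Definition calibrated (T : nat) (x : {ffun 'I_T -> bool}) (q : 'I_T -> R) : Prop :=
  (forall t, 0 <= q t <= 1) /\
  (forall alpha : R, \sum_(t < T) ((x t)%:R - q t) * (q t == alpha)%:R = 0).

Definition CalDist (T : nat) (x : {ffun 'I_T -> bool}) (p : 'I_T -> R) : R :=
  inf [set r | exists q, calibrated x q /\ r = \sum_(t < T) `|p t - q t|].

(* Expectation under i.i.d. Bernoulli(1/2) bits = uniform average. *)
Definition Eunif (T : nat) (f : {ffun 'I_T -> bool} -> R) : R :=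
  (2 ^+ T)^-1 * \sum_(x : {ffun 'I_T -> bool}) f x.
End Defs.

From mathcomp Require Import all_boot all_order all_algebra.
From mathcomp Require Import all_classical all_reals all_analysis.
From mathcomp Require Import ring lra.
Import Order.TTheory GRing.Theory Num.Theory.
Local Open Scope ring_scope.
Set Implicit Arguments. Unset Strict Implicit. Unset Printing Implicit Defensive.

(* Rounds with S_{t-1} > 0 were
   predicted 1/2 + e; greedily removing rounds from this class until its
   excess of ones over 1/2 + e is at most 1 removes at most 4 |M+| + 4 e T
   rounds, where M+ is the excess of ones over 1/2 on the class.  Removed
   rounds and rounds with S_{t-1} = 0 are re-centred at 1/2, each at cost e,
   and symmetrically for S_{t-1} < 0.  Recalibrating each of the three
   classes to its empirical mean is calibrated; the middle class is then
   balanced up to |S_T| plus the re-centring cost, whence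
     CalDist <= 4 + |S_T| + 8 e (|M+| + |M-|) + 8 e^2 T.
   Under uniform bits M+ and M- are martingales with E M^2 <= T/4, and since
   the drift -e sgn(S_t) pulls S_t towards 0, E cosh(2 e S_t) stays below 4
   for e <= 1/4, so E |S_T| <= 4 / e.  With e = T^(-1/3) every term is
   O(T^(1/3)); when e > 1/4 we have T < 64 and CalDist <= 3T/2 trivially. *)

(** * Averaging over uniform bits *)

Section UniformAverage.
Variables (R : realType) (T : nat).
Local Notation cube := {ffun 'I_T -> bool}.
Implicit Types (x : cube) (f g : cube -> R).

Lemma Eunif_le f g : (forall x, f x <= g x) -> Eunif f <= Eunif g.
Proof. by move=> fg; rewrite ler_wpM2l ?invr_ge0 ?exprn_ge0 // ler_sum. Qed.

Lemma eq_Eunif f g : (forall x, f x = g x) -> Eunif f = Eunif g.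
Proof. by move=> fg; rewrite /Eunif; under eq_bigr do rewrite fg. Qed.

Lemma EunifD f g : Eunif (fun x => f x + g x) = Eunif f + Eunif g.
Proof. by rewrite /Eunif big_split mulrDr. Qed.

Lemma EunifZ (a : R) f : Eunif (fun x => a * f x) = a * Eunif f.
Proof. by rewrite /Eunif -mulr_sumr mulrCA. Qed.

Lemma Eunif_cst (a : R) : Eunif (fun _ : cube => a) = a.
Proof.
rewrite /Eunif sumr_const card_ffun card_bool card_ord -[a *+ _]mulr_natr natrX.
by rewrite mulrCA mulVf ?mulr1 // expf_neq0 ?pnatr_eq0.
Qed.

Definition flip_bit (i : 'I_T) x : cube :=
  [ffun j => if j == i then ~~ x j else x j].

Lemma flip_bitK i : involutive (flip_bit i).
Proof.
by move=> x; apply/ffunP=> j; rewrite !ffunE; case: eqP => // _; rewrite negbK.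
Qed.

Lemma flip_bit_id i x : flip_bit i x i = ~~ x i.
Proof. by rewrite ffunE eqxx. Qed.

Lemma flip_bit_ne i j x : j != i -> flip_bit i x j = x j.
Proof. by rewrite ffunE => /negbTE ->. Qed.

Lemma Eunif_bit_avg (i : 'I_T) (Phi : bool -> cube -> R) :
  (forall b x, Phi b (flip_bit i x) = Phi b x) ->
  Eunif (fun x => Phi (x i) x) =
  Eunif (fun x => (Phi true x + Phi false x) / 2).
Proof.
move=> Phi_flip.
have flipE : \sum_(x : cube) Phi (x i) x = \sum_(x : cube) Phi (~~ x i) x.
  rewrite (reindex_inj (can_inj (flip_bitK i))) /=.
  by apply: eq_bigr => x _; rewrite flip_bit_id Phi_flip.
have splitE : \sum_(x : cube) (Phi true x + Phi false x) =
              \sum_(x : cube) Phi (x i) x + \sum_(x : cube) Phi (~~ x i) x.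
  by rewrite -big_split; apply: eq_bigr => x _; case: (x i); rewrite // addrC.
by rewrite /Eunif -mulr_suml splitE -flipE; congr (_ * _); field.
Qed.

End UniformAverage.

Section ForecasterState.
Variables (R : realType) (e : R).

Lemma Sstate_prefix (f g : nat -> R) n :
  (forall t, (t < n)%N -> f t = g t) -> Sstate e f n = Sstate e g n.
Proof.
elim: n => [//|n IHn] fg /=.
by rewrite IHn ?fg // => t /ltnW; apply: fg.
Qed.

Lemma Sstate_sum (f : nat -> R) n :
  Sstate e f n = \sum_(t < n) (f t - forecast e f t).
Proof. by elim: n => [|n IHn] /=; rewrite ?big_ord0 // big_ord_recr -IHn. Qed.

Variable T : nat.
Implicit Types (x : {ffun 'I_T -> bool}).

Lemma bitval_ord x (i : 'I_T) : bitval R x i = (x i)%:R.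
Proof. by rewrite /bitval insubT //= => lt_iT; congr ((x _)%:R); apply: val_inj. Qed.

Lemma bitval_flip (i : 'I_T) x (t : nat) :
  t != i -> bitval R (flip_bit i x) t = bitval R x t.
Proof.
move=> neq_ti; rewrite /bitval; case: insubP => [j _ jE|] //=.
by rewrite flip_bit_ne // -(inj_eq val_inj) jE.
Qed.

Lemma Sstate_flip (i : 'I_T) x t : (t <= i)%N ->
  Sstate e (bitval R (flip_bit i x)) t = Sstate e (bitval R x) t.
Proof.
move=> le_ti; apply: Sstate_prefix => u lt_ut.
by rewrite bitval_flip // neq_ltn (leq_trans lt_ut le_ti).
Qed.

Lemma Sstate_ordS x (i : 'I_T) :
  Sstate e (bitval R x) i.+1 =
  Sstate e (bitval R x) i + ((x i)%:R - forecast e (bitval R x) i).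
Proof. by rewrite /= bitval_ord. Qed.

Lemma forecast_dist_half (f : nat -> R) t : 0 <= e -> `|forecast e f t - 2^-1| <= e.
Proof.
move=> e_ge0; rewrite /forecast addrC addKr normrM ger0_norm //.
by rewrite -[leRHS]mulr1 ler_wpM2l // normr_sg; case: (_ == 0).
Qed.

End ForecasterState.

(** * Moments under uniform bits *)

Lemma le_of_mul_le1 (R : numDomainType) (w d p : R) :
  0 <= w -> 0 <= p -> w * d <= 1 -> 1 <= d * p -> w <= p.
Proof.
move=> w_ge0 p_ge0 wd dp.
by apply: (le_trans (_ : w <= w * (d * p))); [rewrite ler_peMr | rewrite mulrA ler_piMl].
Qed.

Section Cosh.
Variable R : realType.
Implicit Types y b : R.

Definition coshR y := (expR y + expR (- y)) / 2.

Lemma coshRN y : coshR (- y) = coshR y.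
Proof. by rewrite /coshR opprK addrC. Qed.

Lemma coshR0 : coshR 0 = 1.
Proof. by rewrite /coshR oppr0 expR0; field. Qed.

Lemma coshRD_avg y u : (coshR (y + u) + coshR (y - u)) / 2 = coshR y * coshR u.
Proof. by rewrite /coshR opprD opprB !expRD; ring. Qed.

Lemma coshR_ge_norm y : `|y| / 2 <= coshR y.
Proof.
rewrite /coshR; have := expR_ge1Dx y; have := expR_ge1Dx (- y).
have := expR_gt0 y; have := expR_gt0 (- y).
by case: (ler0P y) => _; lra.
Qed.

Lemma coshR_ge0 y : 0 <= coshR y.
Proof. by apply: le_trans (coshR_ge_norm y); rewrite divr_ge0. Qed.

Lemma expR_mul1B_le1 y : expR y * (1 - y) <= 1.
Proof.
rewrite -[leRHS](expRxMexpNx_1 y) ler_wpM2l ?(ltW (expR_gt0 y)) //.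
by have := expR_ge1Dx (- y); lra.
Qed.

Lemma expRN_le1 y : 0 <= y -> expR (- y) <= 1.
Proof. by move=> y_ge0; have := expR_mul1B_le1 (- y); have := expR_gt0 (- y); nra. Qed.

Lemma coshR_subr_le y b : 0 <= y -> 0 <= b ->
  coshR (y - b) <= expR (- b) * coshR y + (expR b - expR (- b)) / 2.
Proof.
move=> y_ge0 b_ge0.
have gap : 0 <= (expR b - expR (- b)) * (1 - expR (- y)).
  apply: mulr_ge0; rewrite subr_ge0 ?expRN_le1 //.
  by apply: (le_trans (expRN_le1 b_ge0)); have := expR_ge1Dx b; lra.
have -> : coshR (y - b) = (expR y * expR (- b) + expR (- y) * expR b) / 2.
  by rewrite /coshR -!expRD opprB (addrC b).
rewrite /coshR; lra.
Qed.

Lemma coshR_sub_sg y b : 0 <= b ->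
  coshR (y - b * Num.sg y) <= expR (- b) * coshR y + (expR b - expR (- b)) / 2.
Proof.
move=> b_ge0; case: sgrP => [->|y_gt0|y_lt0].
- rewrite mulr0 subr0 coshR0 mulr1.
  by have := expR_ge1Dx b; have := expR_ge1Dx (- b); lra.
- by rewrite mulr1; apply: coshR_subr_le => //; apply: ltW.
- rewrite (_ : y - b * -1 = - (- y - b)) ?coshRN -?(coshRN y); last by ring.
  by apply: coshR_subr_le => //; rewrite oppr_ge0 ltW.
Qed.

Lemma coshR_le_poly e : 0 <= e <= 4^-1 ->
  coshR e <= 1 + e ^+ 2 + 2 * (e ^+ 2) ^+ 2.
Proof.
case/andP=> e_ge0 e_le.
have up : expR e * (1 - e) * (1 + e) <= 1 + e.
  by rewrite -[leRHS]mul1r; apply: ler_wpM2r; [lra | exact: expR_mul1B_le1].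
have dn : expR (- e) * (1 + e) * (1 - e) <= 1 - e.
  rewrite -[leRHS]mul1r; apply: ler_wpM2r; first lra.
  by have := expR_mul1B_le1 (- e); rewrite opprK.
apply: (@le_of_mul_le1 _ _ (1 - e ^+ 2)); rewrite ?coshR_ge0 //.
- by apply: addr_ge0; [apply: addr_ge0|apply: mulr_ge0]; rewrite ?exprn_ge0.
- by rewrite /coshR expr2; lra.
- have : 0 <= (e ^+ 2) ^+ 2 * (1 - 2 * e ^+ 2).
    by rewrite mulr_ge0 ?exprn_ge0 // subr_ge0 expr2; nra.
  by rewrite !exprS expr0 !mulr1; lra.
Qed.

(* [4] is a fixed point of the one-step bound
   [E coshR (2 e S') <= coshR e * (expR (- 2 e^2) * E coshR (2 e S) + sinh (2 e^2))]. *)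
Lemma coshR_drift_le e : 0 <= e <= 4^-1 ->
  coshR e * (4 * expR (- (2 * e ^+ 2))
             + (expR (2 * e ^+ 2) - expR (- (2 * e ^+ 2))) / 2) <= 4.
Proof.
move=> e_bnd; have [e_ge0 e_le] := andP e_bnd.
have cosh_le := coshR_le_poly e_bnd.
set x := e ^+ 2 in cosh_le *.
have x_ge0 : 0 <= x by rewrite exprn_ge0.
have x_le : x <= 16^-1 by rewrite /x expr2; nra.
have expNb : expR (- (2 * x)) <= 1 - 2 * x + (2 * x) ^+ 2.
  apply: (@le_of_mul_le1 _ _ (1 + 2 * x) _ (ltW (expR_gt0 _))).
  - by rewrite expr2; nra.
  - by have := expR_mul1B_le1 (- (2 * x)); rewrite opprK.
  - by rewrite expr2; nra.
have expb : expR (2 * x) <= 1 + 2 * x + 2 * (2 * x) ^+ 2.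
  apply: (@le_of_mul_le1 _ _ (1 - 2 * x) _ (ltW (expR_gt0 _))).
  - by rewrite expr2; nra.
  - exact: expR_mul1B_le1.
  - by rewrite expr2; nra.
have mix_le : 4 * expR (- (2 * x)) + (expR (2 * x) - expR (- (2 * x))) / 2
              <= 4 - 6 * x + 18 * x ^+ 2.
  by rewrite !expr2 in expNb expb *; lra.
apply: (le_trans (ler_pM (coshR_ge0 e) _ cosh_le mix_le)).
  by have := expR_gt0 (2 * x); have := expR_gt0 (- (2 * x)); lra.
have : 0 <= x * (2 - 20 * x - 6 * x ^+ 2 - 36 * x ^+ 3).
  by rewrite mulr_ge0 // !exprS expr0 !mulr1; nra.
by rewrite !exprS expr0 !mulr1; lra.
Qed.

End Cosh.

Section RandomWalk.
Variables (R : realType) (T : nat) (e : R).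
Local Notation cube := {ffun 'I_T -> bool}.
Local Notation S x t := (Sstate e (bitval R x) t).

Lemma coshR_step_avg (s : R) : 0 < e ->
  (coshR (2 * e * (s + (1 - (2^-1 + e * Num.sg s)))) +
   coshR (2 * e * (s + (0 - (2^-1 + e * Num.sg s))))) / 2
  <= coshR e * (expR (- (2 * e ^+ 2)) * coshR (2 * e * s)
                + (expR (2 * e ^+ 2) - expR (- (2 * e ^+ 2))) / 2).
Proof.
move=> e_gt0; have sgE : Num.sg s = Num.sg (2 * e * s).
  by rewrite sgrM (@gtr0_sg _ (2 * e)) ?mul1r //; lra.
rewrite (_ : 2 * e * (s + (1 - (2^-1 + e * Num.sg s))) =
             2 * e * s - 2 * e ^+ 2 * Num.sg s + e); last by field.
rewrite (_ : 2 * e * (s + (0 - (2^-1 + e * Num.sg s))) =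
             2 * e * s - 2 * e ^+ 2 * Num.sg s - e); last by field.
rewrite coshRD_avg mulrC sgE ler_wpM2l ?coshR_ge0 // coshR_sub_sg //.
by rewrite mulr_ge0 ?exprn_ge0 // ltW.
Qed.

Lemma Eunif_coshR_Sstate t : 0 < e -> e <= 4^-1 -> (t <= T)%N ->
  Eunif (fun x : cube => coshR (2 * e * S x t)) <= 4.
Proof.
move=> e_gt0 e_le; elim: t => [|t IHt] lt_tT.
  by under eq_Eunif do rewrite /= mulr0 coshR0; rewrite Eunif_cst; lra.
pose i := Ordinal lt_tT.
pose Phi (b : bool) (x : cube) :=
  coshR (2 * e * (S x t + (b%:R - (2^-1 + e * Num.sg (S x t))))).
under eq_Eunif => x do rewrite (Sstate_ordS _ x i).
rewrite (@Eunif_bit_avg _ _ i Phi); last by move=> b x; rewrite /Phi Sstate_flip.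
apply: (le_trans (Eunif_le (fun x => coshR_step_avg (S x t) e_gt0))).
rewrite EunifZ EunifD EunifZ Eunif_cst.
have e_bnd : 0 <= e <= 4^-1 by rewrite e_le andbT ltW.
apply: le_trans (coshR_drift_le e_bnd).
apply: ler_wpM2l; first exact: coshR_ge0.
rewrite lerD2r mulrC; apply: ler_wpM2r; first exact: ltW (expR_gt0 _).
exact: IHt (ltnW lt_tT).
Qed.

Lemma Eunif_norm_Sstate : 0 < e -> e <= 4^-1 ->
  Eunif (fun x : cube => `|S x T|) <= 4 / e.
Proof.
move=> e_gt0 e_le; rewrite ler_pdivlMr // mulrC -EunifZ.
apply: le_trans (Eunif_coshR_Sstate e_gt0 e_le (leqnn T)); apply: Eunif_le => x.
apply: le_trans (coshR_ge_norm _); rewrite !normrM gtr0_norm // ger0_norm; lra.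
Qed.

Definition excess (P : pred R) (x : cube) t : R :=
  \sum_(j < t | P (S x j)) (bitval R x j - 2^-1).

Lemma Eunif_excess_sq (P : pred R) t : (t <= T)%N ->
  Eunif (fun x => excess P x t ^+ 2) <= t%:R / 4.
Proof.
elim: t => [|t IHt] lt_tT.
  by under eq_Eunif do rewrite /excess big_ord0 expr0n; rewrite Eunif_cst mul0r.
pose i := Ordinal lt_tT.
pose Phi (b : bool) (x : cube) :=
  (excess P x t + (if P (S x t) then b%:R - 2^-1 else 0)) ^+ 2.
under eq_Eunif => x do
  rewrite /excess big_mkcond big_ord_recr /= -big_mkcond (bitval_ord R x i).
rewrite (@Eunif_bit_avg _ _ i Phi); last first.
  move=> b x; rewrite /Phi Sstate_flip //; congr ((_ + _) ^+ 2).
  rewrite /excess; apply: eq_big => [j|j _]; first by rewrite Sstate_flip // ltnW.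
  by rewrite bitval_flip // neq_ltn ltn_ord.
apply: le_trans (_ : Eunif (fun x => excess P x t ^+ 2 + 4^-1) <= _).
  apply: Eunif_le => x; rewrite /Phi; case: (P _) => /=; last by rewrite addr0; lra.
  by rewrite !expr2; lra.
by rewrite EunifD Eunif_cst -[t.+1]addn1 natrD; have := IHt (ltnW lt_tT); lra.
Qed.

End RandomWalk.

(** * Recalibration *)

Lemma sum_norm_class_sums_le (R : numDomainType) (I L : finType) (lab : I -> L)
    (l0 : L) (D : I -> R) :
  \sum_l `|\sum_(i | lab i == l) D i| <=
  `|\sum_i D i| + (\sum_(l | l != l0) `|\sum_(i | lab i == l) D i|) *+ 2.
Proof.
have totalE : \sum_i D i =
    \sum_(i | lab i == l0) D i + \sum_(l | l != l0) \sum_(i | lab i == l) D i.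
  by rewrite (partition_big lab xpredT) // (bigD1 l0).
rewrite (bigD1 l0) //= mulr2n addrA lerD2r.
rewrite -[X in `|X|](addrK (\sum_(l | l != l0) \sum_(i | lab i == l) D i)) -totalE.
by apply: le_trans (ler_normB _ _) _; rewrite lerD2l ler_norm_sum.
Qed.

Lemma normrB_same_sign (R : realDomainType) (a s : R) :
  0 <= a * s -> `|a| <= `|s| -> `|s - a| = `|s| - `|a|.
Proof.
by case: (ler0P s) => ?; case: (ler0P a) => ?; case: (ler0P (s - a)) => ? ? ?; nra.
Qed.

Section GreedyTrim.
Variables (R : realType) (I : finType) (X : I -> R) (p : R).
Hypotheses (X01 : forall i, X i = 0 \/ X i = 1) (p_bnd : 4^-1 <= p <= 3 / 4).

(* Some term [X i - p] has the sign of the sum, and [1/4 <= |X i - p| <= 3/4 < |sum|]. *)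
Lemma exists_trim_step (A : {set I}) :
  1 < `|\sum_(i in A) (X i - p)| ->
  exists2 i, i \in A &
    `|\sum_(j in A :\ i) (X j - p)| <= `|\sum_(j in A) (X j - p)| - 4^-1.
Proof.
move=> s_gt1; pose s := \sum_(j in A) (X j - p).
have [i iA same_sign] : exists2 i, i \in A & 0 <= (X i - p) * s.
  apply/exists_inP; apply: contraLR s_gt1; rewrite negb_exists_in -leNgt.
  move=> /forall_inP opp; have : s * s <= 0.
    rewrite {1}/s mulr_suml sumr_le0 // => j /opp; rewrite -ltNge; exact: ltW.
  by rewrite -expr2 -real_normK ?num_real // => sq_le0; nra.
have a_bnd : 4^-1 <= `|X i - p| <= 3 / 4.
  by have [->|->] := X01 i; rewrite ?sub0r ?normrN ger0_norm; move: p_bnd => /andP[]; lra.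
exists i => //; rewrite -/s in s_gt1 *.
have -> : \sum_(j in A :\ i) (X j - p) = s - (X i - p).
  by rewrite /s (big_setD1 i iA) /= addrC addrK.
by rewrite normrB_same_sign //; case/andP: a_bnd => ? ?; lra.
Qed.

Lemma exists_trimmed_subset (A : {set I}) :
  exists B : {set I}, [/\ B \subset A, `|\sum_(i in B) (X i - p)| <= 1 &
    #|A :\: B|%:R <= 4 * `|\sum_(i in A) (X i - p)|].
Proof.
move: {2}#|A| (leqnn #|A|) => n; elim: n A => [|n IHn] A le_An;
  (have [small|big] := lerP `|\sum_(i in A) (X i - p)| 1;
   first by exists A; rewrite subxx finset.setDv cards0 small mulr_ge0).
  move: le_An big; rewrite leqn0 cards_eq0 => /eqP ->.
  by rewrite big_set0 normr0 ltr10.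
have [i iA trim] := exists_trim_step big.
have [|B [sBA smallB cardB]] := IHn (A :\ i).
  by move: le_An; rewrite (cardsD1 i A) iA.
exists B; split => //; first exact: fintype.subset_trans sBA (subD1set A i).
have iAB : i \in A :\: B.
  rewrite inE iA andbT; apply: contraTN isT => /(fintype.subsetP sBA).
  by rewrite !inE eqxx.
rewrite (cardsD1 i) iAB (_ : (A :\: B) :\ i = A :\ i :\: B) ?natrD; last first.
  by rewrite !finset.setDDl finset.setUC.
by rewrite /=; lra.
Qed.

End GreedyTrim.

Section Recalibration.
Variables (R : realType) (T : nat) (x : {ffun 'I_T -> bool}).
Local Notation X t := ((x t)%:R : R).

Lemma bit_bnd t : 0 <= X t <= 1.
Proof. by case: (x t) => /=; rewrite ?ler01 ?lexx. Qed.

Lemma CalDist_le_calibrated (P q : 'I_T -> R) :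
  calibrated x q -> CalDist x P <= \sum_t `|P t - q t|.
Proof.
move=> q_cal; apply: ge_inf; last by exists q.
by exists 0 => _ [q' [_ ->]]; apply: sumr_ge0 => t _; apply: normr_ge0.
Qed.

Variables (L : finType) (lab : 'I_T -> L).

Definition class_size l : R := \sum_(t | lab t == l) 1.

(* An empty class gets mean [0] since [0 / 0 = 0]. *)
Definition class_mean l : R := (\sum_(t | lab t == l) X t) / class_size l.

Lemma class_sum_cst l (a : R) : \sum_(t | lab t == l) a = class_size l * a.
Proof. by rewrite /class_size mulr_suml; under [RHS]eq_bigr do rewrite mul1r. Qed.

Lemma class_sum_mean l : \sum_(t | lab t == l) X t = class_size l * class_mean l.
Proof.
rewrite /class_mean; have [size0|size_neq0] := eqVneq (class_size l) 0.
  rewrite size0 mul0r; apply/eqP; rewrite eq_le; apply/andP; split.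
    by rewrite -[leRHS]size0; apply: ler_sum => t _; case/andP: (bit_bnd t).
  by apply: sumr_ge0 => t _; case/andP: (bit_bnd t).
by rewrite mulrC divfK.
Qed.

Lemma class_mean_bnd l : 0 <= class_mean l <= 1.
Proof.
have size_ge0 : 0 <= class_size l by apply: sumr_ge0 => *; apply: ler01.
have sum_ge0 : 0 <= \sum_(t | lab t == l) X t.
  by apply: sumr_ge0 => t _; case/andP: (bit_bnd t).
have sum_le : \sum_(t | lab t == l) X t <= class_size l.
  by apply: ler_sum => t _; case/andP: (bit_bnd t).
rewrite /class_mean divr_ge0 //=; have [->|size_neq0] := eqVneq (class_size l) 0.
  by rewrite invr0 mulr0 ler01.
by rewrite ler_pdivrMr ?mul1r // lt_def size_neq0.
Qed.

Lemma calibrated_class_mean : calibrated x (fun t => class_mean (lab t)).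
Proof.
split=> [t|alpha]; first exact: class_mean_bnd.
rewrite (partition_big lab xpredT) //=; apply: big1 => l _.
under eq_bigr => t /eqP-> do []; rewrite -big_distrl /= big_split /= sumrN.
by rewrite class_sum_cst class_sum_mean subrr mul0r.
Qed.

(* The calibrated witness recalibrates every class to its empirical mean. *)
Lemma CalDist_le_recenter (P : 'I_T -> R) (c : L -> R) :
  CalDist x P <=
  \sum_t `|P t - c (lab t)| + \sum_l `|\sum_(t | lab t == l) (X t - c (lab t))|.
Proof.
apply: le_trans (CalDist_le_calibrated P calibrated_class_mean) _.
apply: le_trans (_ : \sum_t (`|P t - c (lab t)| + `|c (lab t) - class_mean (lab t)|) <= _).
  by apply: ler_sum => t _; rewrite -[P t - _](subrKA (c (lab t))) ler_normD.
rewrite big_split lerD2l /= (partition_big lab xpredT) //=; apply: ler_sum => l _.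
under eq_bigr => t /eqP-> do []; under [Y in _ <= `|Y|]eq_bigr => t /eqP-> do [].
rewrite class_sum_cst big_split sumrN /= class_sum_cst class_sum_mean -mulrBr.
rewrite normrM distrC ger0_norm //.
exact: sumr_ge0 (fun _ _ => ler01).
Qed.

End Recalibration.

Lemma CalDist_le_dist_half (R : realType) T (x : {ffun 'I_T -> bool})
    (P : 'I_T -> R) (b : R) :
  (forall t, `|P t - 2^-1| <= b) -> CalDist x P <= (b + 2^-1) * T%:R.
Proof.
move=> P_near; pose lab (_ : 'I_T) := tt.
apply: le_trans (CalDist_le_calibrated P (calibrated_class_mean R x lab)) _.
have -> : (T%:R : R) = \sum_(t < T) 1 by rewrite sumr_const card_ord.
rewrite mulr_sumr ler_sum // => t _.
rewrite mulr1 -[P t - _](subrKA 2^-1); apply: le_trans (ler_normD _ _) _.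
rewrite lerD // ler_norml; have := class_mean_bnd R x lab tt; case/andP=> ? ?.
by apply/andP; split; lra.
Qed.

(** * The sign forecaster *)

Section TrimmedLabels.
Variables (R : realType) (T : nat) (s : 'I_T -> R) (e : R) (Bp Bn : {set 'I_T}).

Definition trim_label t : option bool :=
  if t \in Bp then Some true else if t \in Bn then Some false else None.

Definition label_center (l : option bool) : R :=
  match l with Some true => 2^-1 + e | Some false => 2^-1 - e | None => 2^-1 end.

Hypotheses (sub_Bp : Bp \subset [set t | 0 < s t]) (sub_Bn : Bn \subset [set t | s t < 0]).

Lemma trim_label_true t : (trim_label t == Some true) = (t \in Bp).
Proof. by rewrite /trim_label; case: (t \in Bp); case: (t \in Bn). Qed.

Lemma trim_label_false t : (trim_label t == Some false) = (t \in Bn).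
Proof.
rewrite /trim_label; case Bp_t: (t \in Bp); case Bn_t: (t \in Bn) => //.
move/(fintype.subsetP sub_Bp): Bp_t; move/(fintype.subsetP sub_Bn): Bn_t.
by rewrite !inE => /lt_trans/[apply]; rewrite ltxx.
Qed.

Lemma label_center_gap t : 0 <= e ->
  `|2^-1 + e * Num.sg (s t) - label_center (trim_label t)| <=
  e * ((t \in [set t | 0 < s t] :\: Bp)%:R + (t \in [set t | s t < 0] :\: Bn)%:R).
Proof.
move=> e_ge0; move: (fintype.subsetP sub_Bp t) (fintype.subsetP sub_Bn t).
rewrite /trim_label !inE; case: (t \in Bp); case: (t \in Bn) => /= Bp_pos Bn_neg;
  case: (sgrP (s t)) => st; rewrite ?Bp_pos ?Bn_neg //= ?addr0 ?subr0 ?mulr1 ?mulrN1;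
  rewrite ler_norml; apply/andP; split; lra.
Qed.

End TrimmedLabels.

Lemma sum_option_neq_None (R : nmodType) (F : option bool -> R) :
  \sum_(l | l != None) F l = F (Some true) + F (Some false).
Proof.
rewrite (bigD1 (Some true)) // (bigD1 (Some false)) // big_pred0 => [|[[]|]] //.
by rewrite /= addr0.
Qed.

Lemma sumr_mem_card (R : pzSemiRingType) (I : finType) (A : {set I}) :
  \sum_i ((i \in A)%:R : R) = #|A|%:R.
Proof.
rewrite -sum1_card natr_sum [RHS]big_mkcond.
by apply: eq_bigr => i _; case: (i \in A).
Qed.

Section SignForecast.
Variables (R : realType) (T : nat) (x : {ffun 'I_T -> bool}) (s : 'I_T -> R) (e : R).
Local Notation X t := ((x t)%:R : R).
Local Notation P := (fun t => 2^-1 + e * Num.sg (s t)).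
Local Notation Gp := [set t | 0 < s t].
Local Notation Gn := [set t | s t < 0].

Lemma CalDist_trimmed_le (Bp Bn : {set 'I_T}) :
  Bp \subset Gp -> Bn \subset Gn -> 0 <= e ->
  `|\sum_(t in Bp) (X t - (2^-1 + e))| <= 1 -> `|\sum_(t in Bn) (X t - (2^-1 - e))| <= 1 ->
  CalDist x P <=
  4 + `|\sum_t (X t - P t)| + (e * (#|Gp :\: Bp| + #|Gn :\: Bn|)%:R) *+ 2.
Proof.
move=> sub_Bp sub_Bn e_ge0 Bp_bal Bn_bal.
pose lab := trim_label Bp Bn; pose c := label_center e.
pose W := \sum_t `|P t - c (lab t)|.
have W_le : W <= e * (#|Gp :\: Bp| + #|Gn :\: Bn|)%:R.
  rewrite natrD -!sumr_mem_card -big_split mulr_sumr; apply: ler_sum => t _.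
  exact: label_center_gap.
have total_le : `|\sum_t (X t - c (lab t))| <= `|\sum_t (X t - P t)| + W.
  rewrite (eq_bigr (fun t => (X t - P t) + (P t - c (lab t)))) => [|t _]; last first.
    by rewrite addrA subrK.
  by rewrite big_split; apply: le_trans (ler_normD _ _) _; rewrite lerD2l ler_norm_sum.
have class_true : \sum_(t | lab t == Some true) (X t - c (lab t)) =
                  \sum_(t in Bp) (X t - (2^-1 + e)).
  by under eq_bigr => t /eqP-> do []; apply: eq_bigl => t; rewrite trim_label_true.
have class_false : \sum_(t | lab t == Some false) (X t - c (lab t)) =
                   \sum_(t in Bn) (X t - (2^-1 - e)).
  under eq_bigr => t /eqP-> do [].
  by apply: eq_bigl => t; rewrite (trim_label_false sub_Bp sub_Bn).
apply: le_trans (CalDist_le_recenter x lab P c) _.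
apply: le_trans (lerD (lexx W) (sum_norm_class_sums_le lab None _)) _.
rewrite sum_option_neq_None class_true class_false !mulr2n; lra.
Qed.

Lemma card_sign_sets_le : (#|Gp| + #|Gn| <= T)%N.
Proof.
rewrite -cardsUI (_ : Gp :&: Gn = finset.set0) ?cards0 ?addn0.
  by rewrite -[T in (_ <= T)%N]card_ord max_card.
by apply/setP => t; rewrite !inE lt_asym.
Qed.

Lemma CalDist_sign_forecast_le : 0 <= e -> e <= 4^-1 ->
  CalDist x P <= 4 + `|\sum_t (X t - P t)|
    + 8 * e * (`|\sum_(t < T | 0 < s t) (X t - 2^-1)| + `|\sum_(t < T | s t < 0) (X t - 2^-1)|)
    + 8 * e ^+ 2 * T%:R.
Proof.
move=> e_ge0 e_le.
have X01 t : X t = 0 \/ X t = 1 by case: (x t); [right | left].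
have up_bnd : 4^-1 <= 2^-1 + e <= 3 / 4 by apply/andP; split; lra.
have dn_bnd : 4^-1 <= 2^-1 - e <= 3 / 4 by apply/andP; split; lra.
have [Bp [sub_Bp Bp_bal Bp_card]] := exists_trimmed_subset X01 up_bnd Gp.
have [Bn [sub_Bn Bn_bal Bn_card]] := exists_trimmed_subset X01 dn_bnd Gn.
apply: le_trans (CalDist_trimmed_le sub_Bp sub_Bn e_ge0 Bp_bal Bn_bal) _.
have Gp_sum : \sum_(t in Gp) (X t - (2^-1 + e)) =
              \sum_(t < T | 0 < s t) (X t - 2^-1) - e * #|Gp|%:R.
  rewrite (eq_bigr (fun t => (X t - 2^-1) - e)) => [|t _]; last by ring.
  by rewrite sumrB sumr_const mulr_natr; congr (_ - _); apply: eq_bigl => t; rewrite inE.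
have Gn_sum : \sum_(t in Gn) (X t - (2^-1 - e)) =
              \sum_(t < T | s t < 0) (X t - 2^-1) + e * #|Gn|%:R.
  rewrite (eq_bigr (fun t => (X t - 2^-1) + e)) => [|t _]; last by ring.
  by rewrite big_split sumr_const mulr_natr; congr (_ + _); apply: eq_bigl => t; rewrite inE.
have cards_le : e * (#|Gp|%:R + #|Gn|%:R) <= e * T%:R.
  by rewrite -natrD ler_wpM2l // ler_nat card_sign_sets_le.
move: Bp_card Bn_card; rewrite Gp_sum Gn_sum => Bp_card Bn_card.
have Gp_le := ler_normB (\sum_(t < T | 0 < s t) (X t - 2^-1)) (e * #|Gp|%:R).
have Gn_le := ler_normD (\sum_(t < T | s t < 0) (X t - 2^-1)) (e * #|Gn|%:R).
rewrite normrM (ger0_norm e_ge0) normr_nat in Gp_le.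
rewrite normrM (ger0_norm e_ge0) normr_nat in Gn_le.
set Mp := `|\sum_(t < T | 0 < s t) _| in Gp_le *.
set Mn := `|\sum_(t < T | s t < 0) _| in Gn_le *.
have trim_le : (#|Gp :\: Bp| + #|Gn :\: Bn|)%:R <= 4 * (Mp + Mn) + 4 * e * T%:R.
  by rewrite natrD; lra.
have := ler_wpM2l e_ge0 trim_le.
by rewrite mulr2n natrD expr2; lra.
Qed.

End SignForecast.

Lemma normr_le_sqr (R : realFieldType) (m c : R) : 0 < c -> 2 * `|m| <= c * m ^+ 2 + c^-1.
Proof.
move=> c_gt0; have cV : c * c^-1 = 1 by rewrite mulfV ?gt_eqF.
have : 0 <= c * (`|m| - c^-1) ^+ 2 by rewrite mulr_ge0 ?sqr_ge0 ?ltW.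
have cVm : c * c^-1 * `|m| = `|m| by rewrite cV mul1r.
have cVV : c * c^-1 * c^-1 = c^-1 by rewrite cV mul1r.
by rewrite -[m ^+ 2]real_normK ?num_real // !expr2; lra.
Qed.

Lemma Eunif_CalDist_forecast_le (R : realType) (T : nat) (e : R) : 0 < e -> e <= 4^-1 ->
  Eunif (fun x : {ffun 'I_T -> bool} => CalDist x (fun i => forecast e (bitval R x) i))
  <= 4 + 12 / e + 2 * e ^+ 3 * T%:R + 8 * e ^+ 2 * T%:R.
Proof.
move=> e_gt0 e_le.
pose S (x : {ffun 'I_T -> bool}) := Sstate e (bitval R x) T.
pose M (P : pred R) (x : {ffun 'I_T -> bool}) := excess e P x T.
have per_x x : CalDist x (fun i => forecast e (bitval R x) i) <=
    4 + `|S x| + 8 * e * (`|M (fun r : R => 0 < r) x| + `|M (fun r : R => r < 0) x|)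
    + 8 * e ^+ 2 * T%:R.
  have := CalDist_sign_forecast_le x (fun t : 'I_T => Sstate e (bitval R x) t) (ltW e_gt0) e_le.
  have SE : S x = \sum_t ((x t)%:R - forecast e (bitval R x) t).
    by rewrite /S Sstate_sum; apply: eq_bigr => t _; rewrite bitval_ord.
  have ME P : M P x = \sum_(t < T | P (Sstate e (bitval R x) t)) ((x t)%:R - 2^-1).
    by apply: eq_bigr => t _; rewrite bitval_ord.
  by rewrite SE !ME.
have amgm (m : R) : 8 * e * `|m| <= 4 * e ^+ 3 * m ^+ 2 + 4 / e.
  have e4_ge0 : 0 <= 4 * e by rewrite mulr_ge0 // ltW.
  have := ler_wpM2l e4_ge0 (normr_le_sqr m (exprn_gt0 2 e_gt0)).
  have -> : 4 * e * (e ^+ 2 * m ^+ 2 + (e ^+ 2)^-1) = 4 * e ^+ 3 * m ^+ 2 + 4 / e.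
    by field; rewrite gt_eqF.
  lra.
apply: le_trans (_ : Eunif (fun x => 4 + `|S x| + 8 / e + 8 * e ^+ 2 * T%:R
    + 4 * e ^+ 3 * (M (fun r : R => 0 < r) x ^+ 2 + M (fun r : R => r < 0) x ^+ 2)) <= _).
  apply: Eunif_le => x; apply: le_trans (per_x x) _.
  have := amgm (M (fun r : R => 0 < r) x); have := amgm (M (fun r : R => r < 0) x); lra.
rewrite !EunifD !EunifZ EunifD !Eunif_cst.
have := Eunif_norm_Sstate T e_gt0 e_le.
have := ler_wpM2l (exprn_ge0 3 (ltW e_gt0)) (lerD
  (Eunif_excess_sq e (fun r : R => 0 < r) (leqnn T))
  (Eunif_excess_sq e (fun r : R => r < 0) (leqnn T))).
rewrite /S /M /=; lra.
Qed.

Lemma Eunif_CalDist_forecast_le_linear (R : realType) (T : nat) (e : R) : 0 <= e ->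
  Eunif (fun x : {ffun 'I_T -> bool} => CalDist x (fun i => forecast e (bitval R x) i))
  <= (e + 2^-1) * T%:R.
Proof.
move=> e_ge0; apply: le_trans (Eunif_le (g := fun=> (e + 2^-1) * T%:R) _) _.
  by move=> x; apply: CalDist_le_dist_half => t; apply: forecast_dist_half.
by rewrite Eunif_cst.
Qed.

Theorem corollary1 (R : realType) :
  exists C : R, forall T : nat, (0 < T)%N ->
    Eunif (fun x : {ffun 'I_T -> bool} => CalDist x (@preds R T x))
      <= C * powR (T%:R) (3^-1).
Proof.
exists 32 => T T_gt0; set u := powR T%:R 3^-1.
have u_ge1 : 1 <= u by rewrite -(powRr0 T%:R) ler_powR ?ler1n // invr_ge0.
have u_gt0 : 0 < u by apply: lt_le_trans u_ge1.
have u3 : u ^+ 3 = T%:R.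
  by rewrite -powR_mulrn ?powR_ge0 // -powRrM mulVf ?pnatr_eq0 // powRr1 ?ler0n.
rewrite /preds powRN -/u; have e_gt0 : 0 < u^-1 by rewrite invr_gt0.
have [u_ge4 | u_lt4] := lerP 4 u.
- have e_le : u^-1 <= 4^-1 by rewrite lef_pV2 ?posrE.
  apply: le_trans (Eunif_CalDist_forecast_le T e_gt0 e_le) _; rewrite -u3.
  have -> : 4 + 12 / u^-1 + 2 * u^-1 ^+ 3 * u ^+ 3 + 8 * u^-1 ^+ 2 * u ^+ 3 = 6 + 20 * u.
    by field; rewrite gt_eqF.
  lra.
- apply: le_trans (Eunif_CalDist_forecast_le_linear T (ltW e_gt0)) _.
  have : (u^-1 + 2^-1) * u ^+ 3 <= 3 / 2 * u ^+ 3.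
    by apply: ler_wpM2r; [rewrite exprn_ge0 // ltW | have := invf_le1 u_gt0; lra].
  have : u ^+ 3 <= 16 * u by rewrite !exprS expr0 mulr1; nra.
  by rewrite -u3; lra.
Qed.
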